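(* Let $H$ be a group and let $A$ be either the empty set or a normal subgroup of $H$. For $1\leq l\leq m$ let $\mathcal E_{l,m}$ be the subgroup of $H$ generated by all elements $[x_1,\ldots,x_i]^{2^{m-i-k}}$ with $l\leq i\leq m$, $x_1,\ldots,x_i\in H$, $0\leq k\leq m-i$, such that there exist indices $1\leq j_1<\cdots<j_k\leq i$ with $x_{j_1},\ldots,x_{j_k}\in A$ (call these elements generators of $\mathcal E_{l,m}$); when $A=\varnothing$ (so only $k=0$ occurs) write $\widetilde{\mathcal E}_{l,m}$. Let $m\geq1$, $1\leq i\leq m$, $y\in H$, and let $x=[x_1,\ldots,x_i]\in\Gamma_i(H)$ be such that $x^{2^{m-i-k}}$ is a generator of $\mathcal E_{i,m}$ for some $0\leq k\leq m-i$. Then $$[x^{2^{m-i-k}},y]\equiv [x,y]^{2^{m-i-k}}\pmod{\mathcal E_{i+1,m+1}}.$$ In particular, if $x^{2^{m-i}}$ is a generator of $\widetilde{\mathcal E}_{i,m}$, then $[x^{2^{m-i}},y]\equiv[x,y]^{2^{m-i}}\pmod{\widetilde{\mathcal E}_{i+1,m+1}}$.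
   Context: $[a,b]=aba^{-1}b^{-1}$; right-normed iterated commutators $[x_1,\ldots,x_n]=[x_1,[x_2,\ldots,[x_{n-1},x_n]]]$ (with $[x_1]=x_1$); $\Gamma_1(H)=H$, $\Gamma_{i+1}(H)=[\Gamma_i(H),H]$. Each $\mathcal E_{l,m}$ is normal in $H$. Congruence modulo a normal subgroup $N$ means equality of $N$-cosets. *)

From mathcomp Require Import all_boot.
Unset Strict Implicit. Unset Printing Implicit Defensive.

Unset Implicit Arguments.
Record Grp := {
  carrier :> Type;
  gmul : carrier -> carrier -> carrier;
  gone : carrier;
  ginv : carrier -> carrier;
  gmulA : forall a b c, gmul a (gmul b c) = gmul (gmul a b) c;
  gmul1 : forall a, gmul gone a = a;
  gmulV : forall a, gmul (ginv a) a = gone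
}.

Section Defs.
Context {H : Grp}.

Definition comm (a b : H) : H :=
  gmul H a (gmul H b (gmul H (ginv H a) (ginv H b))).

Fixpoint gpow (a : H) (n : nat) : H :=
  match n with 0 => gone H | n'.+1 => gmul H a (gpow a n') end.

(* right-normed iterated commutator [x1,...,xn] = [x1,[x2,...,[x_{n-1},x_n]]], [x1] = x1 *)
Fixpoint icomm (xs : seq H) : H :=
  match xs with
  | [::] => gone H
  | [:: x] => x
  | x :: xs' => comm x (icomm xs')
  end.

Definition is_subgroup (K : H -> Prop) : Prop :=
  K (gone H) /\ (forall a b, K a -> K b -> K (gmul H a b)) /\ (forall a, K a -> K (ginv H a)).

Definition is_normal (K : H -> Prop) : Prop :=
  is_subgroup K /\ forall a g, K a -> K (gmul H g (gmul H a (ginv H g))).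

Definition gen (S : H -> Prop) (g : H) : Prop :=
  forall K, is_subgroup K -> (forall s, S s -> K s) -> K g.

(* x_1,...,x_i (= xs, i = size xs) has k entries in A at indices 1 <= j_1 < ... < j_k <= i *)
Definition has_k_in (A : H -> Prop) (xs : seq H) (k : nat) : Prop :=
  exists js : seq nat, size js = k /\ sorted ltn js /\
    (forall j, j \in js -> (1 <= j <= size xs)%N /\ A (nth (gone H) xs j.-1)).

Definition E_gen (A : H -> Prop) (l m : nat) (g : H) : Prop :=
  exists (xs : seq H) (k : nat),
    let i := size xs in
    [/\ (l <= i <= m)%N, (k <= m - i)%N, has_k_in A xs k &
        g = gpow (icomm xs) (2 ^ (m - i - k))].

Definition E (A : H -> Prop) (l m : nat) : H -> Prop := gen (E_gen A l m).

Definition Etilde (l m : nat) : H -> Prop := E (fun _ => False) l m.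

Definition congr_mod (N : H -> Prop) (a b : H) : Prop := N (gmul H (ginv H a) b).

End Defs.

(** A Hall–Petrescu type congruence: let D_1, D_2, ... be normal subgroups
   with [H, D_r] <= D_(r+1) such that d^(2^(e+1-r)) lies in N for all d in
   D_r, r >= 2.  Then (w z)^(2^e) = w^(2^e) z^(2^e) mod N for w in D_1.  By
   induction on e: (w z)^2 = c w^2 z^2 with c in D_2, and the squares of D_r
   together with D_(r+1) generate a new such sequence satisfying the
   condition for e - 1.  Apply this to the subgroups generated by the
   commutators [u_1, ..., u_r, x_1^g, ..., x_i^g], whose 2^(e+1-r)-th powers
   are generators of E_(i+1,m+1), with w = [y, x] and z = x: this gives
   (y x y^-1)^(2^e) = [y, x]^(2^e) x^(2^e), which rearranges to the claim. *)
From mathcomp Require Import all_boot zify.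
Set Implicit Arguments. Unset Strict Implicit.

Section Group.
Context {H : Grp}.
Local Notation "a ⋆ b" := (gmul H a b) (at level 40, left associativity).
Local Notation "a ^-1" := (ginv H a).
Local Notation one := (gone H).
Implicit Types (a b c d g u w x y z s : H) (N K S : H -> Prop).

Lemma mulgA a b c : (a ⋆ b) ⋆ c = a ⋆ (b ⋆ c).
Proof. by rewrite gmulA. Qed.
Lemma mul1g a : one ⋆ a = a. Proof. exact: gmul1. Qed.
Lemma mulVg a : a^-1 ⋆ a = one. Proof. exact: gmulV. Qed.
Lemma mulKg a b : a^-1 ⋆ (a ⋆ b) = b.
Proof. by rewrite gmulA mulVg mul1g. Qed.
Lemma mulgV a : a ⋆ a^-1 = one.
Proof.
have e : (a^-1)^-1 ⋆ (a^-1 ⋆ (a ⋆ a^-1)) = a ⋆ a^-1 by rewrite mulKg.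
by rewrite -e (gmulA _ a^-1 a) mulVg mul1g mulVg.
Qed.
Lemma mulg1 a : a ⋆ one = a.
Proof. by rewrite -(mulVg a) gmulA mulgV mul1g. Qed.
Lemma mulKVg a b : a ⋆ (a^-1 ⋆ b) = b.
Proof. by rewrite gmulA mulgV mul1g. Qed.
Lemma invgK a : (a^-1)^-1 = a.
Proof. by rewrite -[(a^-1)^-1]mulg1 -(mulVg a) mulKg. Qed.
Lemma invg_eq a b : a ⋆ b = one -> a^-1 = b.
Proof. by move=> e; rewrite -[a^-1]mulg1 -e mulKg. Qed.
Lemma invgM a b : (a ⋆ b)^-1 = b^-1 ⋆ a^-1.
Proof. by apply: invg_eq; rewrite mulgA mulKVg mulgV. Qed.
Lemma invg1 : one^-1 = one.
Proof. by apply: invg_eq; rewrite mul1g. Qed.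

Ltac gsimpl := repeat progress rewrite ?invgM ?invgK ?invg1 ?mulgA ?mul1g ?mulg1
  ?mulKg ?mulKVg ?mulVg ?mulgV.

Definition conjg g a := g ⋆ (a ⋆ g^-1).

Lemma conjgM g a b : conjg g (a ⋆ b) = conjg g a ⋆ conjg g b.
Proof. by rewrite /conjg; gsimpl. Qed.
Lemma conjgV g a : conjg g a^-1 = (conjg g a)^-1.
Proof. by rewrite /conjg; gsimpl. Qed.
Lemma conjg1 g : conjg g one = one.
Proof. by rewrite /conjg; gsimpl. Qed.
Lemma conj1g a : conjg one a = a.
Proof. by rewrite /conjg; gsimpl. Qed.
Lemma conjgJ h g a : conjg h (conjg g a) = conjg (h ⋆ g) a.
Proof. by rewrite /conjg; gsimpl. Qed.
Lemma conjgR g a b : conjg g (comm a b) = comm (conjg g a) (conjg g b).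
Proof. by rewrite /conjg /comm; gsimpl. Qed.

Lemma commgM u a b : comm u (a ⋆ b) = comm u a ⋆ conjg a (comm u b).
Proof. by rewrite /comm /conjg; gsimpl. Qed.
Lemma commgV u a : comm u a^-1 = conjg a^-1 (comm u a)^-1.
Proof. by rewrite /comm /conjg; gsimpl. Qed.
Lemma commg1 u : comm u one = one.
Proof. by rewrite /comm; gsimpl. Qed.
Lemma invg_comm a b : (comm a b)^-1 = comm b a.
Proof. by rewrite /comm; gsimpl. Qed.

Lemma gpow1 a : gpow a 1 = a. Proof. by rewrite /= mulg1. Qed.
Lemma gpow2 a : gpow a 2 = a ⋆ a. Proof. by rewrite /= mulg1. Qed.
Lemma gpow1n n : gpow one n = one.
Proof. by elim: n => //= n ->; rewrite mul1g. Qed.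
Lemma gpowD a m n : gpow a (m + n) = gpow a m ⋆ gpow a n.
Proof. by elim: m => [|m IH] /=; rewrite ?mul1g // IH mulgA. Qed.
Lemma gpowM a m n : gpow a (m * n) = gpow (gpow a m) n.
Proof. by elim: n => [|n IH]; rewrite ?muln0 // mulnS gpowD IH. Qed.
Lemma gpowSr a n : gpow a n.+1 = gpow a n ⋆ a.
Proof. by rewrite -addn1 gpowD gpow1. Qed.
Lemma gpowJ g a n : conjg g (gpow a n) = gpow (conjg g a) n.
Proof. by elim: n => [|n IH] /=; rewrite ?conjg1 // conjgM IH. Qed.
Lemma gpowV a n : gpow a^-1 n = (gpow a n)^-1.
Proof. by elim: n => [|n IH] /=; rewrite ?invg1 // IH -invgM -gpowSr. Qed.

Lemma subgroup_gpow K a n : is_subgroup K -> K a -> K (gpow a n).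
Proof. by move=> [K1 [KM _]] Ka; elim: n => //= n; apply: KM. Qed.

Section Normal.
Variables (N : H -> Prop) (nN : is_normal N).

Lemma normal1 : N one. Proof. by case: nN => [[]]. Qed.
Lemma normalM a b : N a -> N b -> N (a ⋆ b). Proof. by case: nN => [[_ [M _]] _]; apply: M. Qed.
Lemma normalV a : N a -> N a^-1. Proof. by case: nN => [[_ [_ V]] _]; apply: V. Qed.
Lemma normalJ g a : N a -> N (conjg g a). Proof. by case: nN => _; apply. Qed.

Lemma normal_comm u d : N d -> N (comm u d).
Proof.
move=> Nd; have -> : comm u d = conjg u d ⋆ d^-1 by rewrite /comm /conjg; gsimpl.
by apply: normalM; [apply: normalJ | apply: normalV].
Qed.

Lemma normal_gpow_dvdn d p q : N (gpow d p) -> p %| q -> N (gpow d q).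
Proof. by move=> Nd /dvdnP [c ->]; rewrite mulnC gpowM; exact: subgroup_gpow nN.1 Nd. Qed.

Lemma congr_mod_refl a : congr_mod N a a.
Proof. by rewrite /congr_mod mulVg; apply: normal1. Qed.

Lemma congr_mod_trans a b c : congr_mod N a b -> congr_mod N b c -> congr_mod N a c.
Proof.
rewrite /congr_mod => ab bc.
have -> : a^-1 ⋆ c = (a^-1 ⋆ b) ⋆ (b^-1 ⋆ c) by gsimpl.
exact: normalM.
Qed.

Lemma congr_mod_mulr a b c : congr_mod N a b -> congr_mod N (a ⋆ c) (b ⋆ c).
Proof.
rewrite /congr_mod => ab.
have -> : (a ⋆ c)^-1 ⋆ (b ⋆ c) = conjg c^-1 (a^-1 ⋆ b) by rewrite /conjg; gsimpl.
exact: normalJ.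
Qed.

Lemma congr_mod_mulNl c b : N c -> congr_mod N (c ⋆ b) b.
Proof.
rewrite /congr_mod => Nc.
have -> : (c ⋆ b)^-1 ⋆ b = conjg b^-1 c^-1 by rewrite /conjg; gsimpl.
by apply/normalJ/normalV.
Qed.

Lemma congr_mod_mem a b : congr_mod N a b -> N b -> N a.
Proof.
rewrite /congr_mod => ab Nb; rewrite -[a]invgK.
have -> : a^-1 = (a^-1 ⋆ b) ⋆ b^-1 by gsimpl.
by apply/normalV/normalM => //; apply: normalV.
Qed.

Lemma congr_mod_comm_gpow x y n :
  congr_mod N (gpow (conjg y x) n) (gpow (comm y x) n ⋆ gpow x n) ->
  congr_mod N (comm (gpow x n) y) (gpow (comm x y) n).
Proof.
rewrite /congr_mod -gpowJ -[comm x y]invg_comm gpowV.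
set X := gpow x n; set T := gpow (comm y x) n => hXT.
have -> : (comm X y)^-1 ⋆ T^-1 = conjg (conjg y X) ((conjg y X)^-1 ⋆ (T ⋆ X))^-1.
  by rewrite /conjg /comm; gsimpl.
by apply/normalJ/normalV.
Qed.

End Normal.

Lemma mem_gen S s : S s -> gen S s.
Proof. by move=> Ss K _; apply. Qed.

Lemma gen_subgroup S : is_subgroup (gen S).
Proof.
split; first by move=> K [].
split; first by move=> a b Sa Sb K sK SK; case: (sK) => _ [KM _]; apply: KM; [apply: Sa | apply: Sb].
by move=> a Sa K sK SK; case: (sK) => _ [_ KV]; apply: KV; apply: Sa.
Qed.

Lemma gen_ind S K : is_subgroup K -> (forall s, S s -> K s) -> forall g, gen S g -> K g.
Proof. by move=> sK SK g; apply. Qed.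

Lemma gen_subset S K g : (forall s, S s -> gen K s) -> gen S g -> gen K g.
Proof. by move=> SK; apply: gen_ind => //; apply: gen_subgroup. Qed.

Lemma genM S a b : gen S a -> gen S b -> gen S (a ⋆ b).
Proof. by case: (gen_subgroup S) => _ [M _]; apply: M. Qed.

Lemma gen_normal S : (forall s g, S s -> S (conjg g s)) -> is_normal (gen S).
Proof.
move=> SJ; split; first exact: gen_subgroup.
move=> a g; apply: (gen_ind (K := fun a => gen S (conjg g a))); last first.
  by move=> s Ss; apply: mem_gen; apply: SJ.
split; first by rewrite conjg1; case: (gen_subgroup S).
split; first by move=> b c Sb Sc; rewrite conjgM; apply: genM.
by move=> b Sb; rewrite conjgV; case: (gen_subgroup S) => _ [_]; apply.
Qed.

Lemma normal_comm_gen S K : is_normal K -> (forall u s, S s -> K (comm u s)) ->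
  forall u d, gen S d -> K (comm u d).
Proof.
move=> nK SK u d Sd; move: d Sd u.
apply: (gen_ind (K := fun d => forall u, K (comm u d))); last by move=> s Ss u; apply: SK.
split; first by move=> u; rewrite commg1; apply: normal1.
split; first by move=> a b Ka Kb u; rewrite commgM; apply: normalM => //; apply: normalJ.
by move=> a Ka u; rewrite commgV; apply: normalJ => //; apply: normalV.
Qed.

Lemma gen_gpow_closed N K S q : is_normal N -> is_subgroup K ->
  (forall s, S s -> K s /\ N (gpow s q)) ->
  (forall a b, K a -> K b -> N (gpow a q) -> N (gpow b q) -> N (gpow (a ⋆ b) q)) ->
  forall d, gen S d -> N (gpow d q).
Proof.
move=> nN [K1 [KM KV]] SKN KNM d Sd.
suff [] : K d /\ N (gpow d q) by [].
move: d Sd; apply: gen_ind => //; split; first by rewrite gpow1n; split => //; apply: normal1.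
split; first by move=> a b [Ka Na] [Kb Nb]; split; [apply: KM | apply: KNM].
by move=> a [Ka Na]; split; [apply: KV | rewrite gpowV; apply: normalV].
Qed.

Definition is_filtration (D : nat -> H -> Prop) :=
  (forall r, is_normal (D r)) /\ (forall r u d, D r d -> D r.+1 (comm u d)).

Definition power_condition e N (D : nat -> H -> Prop) :=
  forall r d, 2 <= r -> D r d -> N (gpow d (2 ^ (e.+1 - r))).

Definition power_congruence e := forall N D, is_normal N -> is_filtration D ->
  power_condition e N D -> forall w z, D 1 w ->
  congr_mod N (gpow (w ⋆ z) (2 ^ e)) (gpow w (2 ^ e) ⋆ gpow z (2 ^ e)).

Lemma is_filtration_shift D (c : nat) : is_filtration D -> is_filtration (fun r => D (r + c)).
Proof. by move=> [nD DR]; split => // r u d Dd; rewrite addSn; apply: DR. Qed.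

(* The power condition only has to be checked on generators: products are
   handled by the power congruence for the shifted filtration D_(j+r-1). *)
Lemma power_condition_gen e : (forall e', e' < e -> power_congruence e') ->
  forall N D, is_normal N -> is_filtration D ->
  (forall r d, 2 <= r -> D r d -> gen (fun g => D r g /\ N (gpow g (2 ^ (e.+1 - r)))) d) ->
  power_condition e N D.
Proof.
move=> IHe N D nN fD Dgen.
suff PC p r d : 2 <= r -> e.+1 - r = p -> D r d -> N (gpow d (2 ^ (e.+1 - r))).
  by move=> r d r2; apply: PC.
elim/ltn_ind: p r d => p IHp r d r2 def_p Dd.
apply: (gen_gpow_closed (K := D r)) (Dgen r d r2 Dd) => //; first exact: (fD.1 r).1.
move=> a b Da Db; rewrite def_p.
case: p IHp def_p => [|p] IHp def_p Na Nb; first by move: Na Nb; rewrite expn0 !gpow1; apply: normalM.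
apply: (congr_mod_mem nN (b := gpow a (2 ^ p.+1) ⋆ gpow b (2 ^ p.+1))); last exact: normalM.
have r1 : 1 + r.-1 = r by lia.
apply: (IHe p.+1 _ N (fun j => D (j + r.-1))) => //; first lia.
- exact: is_filtration_shift.
- move=> j g j2 Dg; have -> : p.+2 - j = e.+1 - (j + r.-1) by lia.
  by apply: (IHp (e.+1 - (j + r.-1))) => //; lia.
- by rewrite r1.
Qed.

Lemma power_congruence0 : power_congruence 0.
Proof. by move=> N D nN _ _ w z _; rewrite expn0 !gpow1; apply: congr_mod_refl. Qed.

Definition square_filtration D r :=
  gen (fun g => (exists d, D r d /\ g = d ⋆ d) \/ D r.+1 g).

Section SquareFiltration.
Variables (D : nat -> H -> Prop) (fD : is_filtration D).

Lemma square_filtration_normal r : is_normal (square_filtration D r).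
Proof.
apply: gen_normal => s g [[d [Dd ->]]|Ds]; last by right; apply: normalJ (fD.1 _) _ _ Ds.
by left; exists (conjg g d); rewrite conjgM; split => //; apply: normalJ (fD.1 _) _ _ Dd.
Qed.

Lemma square_filtrationP : is_filtration (square_filtration D).
Proof.
split=> [|r u d]; first exact: square_filtration_normal.
apply: normal_comm_gen (square_filtration_normal _) _ _ _ => {}u s [[d0 [Dd0 ->]]|Ds].
  set c := comm u d0.
  have -> : comm u (d0 ⋆ d0) = (c ⋆ c) ⋆ comm c^-1 d0 by rewrite /c /comm; gsimpl.
  apply: genM; apply: mem_gen; first by left; exists c; split => //; apply: fD.2.
  right; rewrite -invg_comm; apply: normalV (fD.1 _) _ _.
  exact: fD.2 _ _ _ (normalV (fD.1 _) (fD.2 _ u _ Dd0)).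
by apply: mem_gen; right; apply: fD.2.
Qed.

Lemma square_filtration_power_condition e N :
  (forall e', e' < e -> power_congruence e') -> is_normal N ->
  power_condition e.+1 N D -> power_condition e N (square_filtration D).
Proof.
move=> IHe nN PCD; apply: power_condition_gen => // [|r d r2].
  exact: square_filtrationP.
apply: gen_subset => s Ds; apply: mem_gen; split; first exact: mem_gen.
case: Ds => [[d0 [Dd0 ->]]|Ds]; last by move: (PCD r.+1 s (leqW r2) Ds); rewrite subSS.
rewrite -gpow2 -gpowM; apply: normal_gpow_dvdn (PCD r d0 r2 Dd0) _ => //.
by rewrite -expnS dvdn_exp2l //; lia.
Qed.

End SquareFiltration.

Lemma power_congruenceS e : (forall e', e' <= e -> power_congruence e') ->
  power_congruence e.+1.
Proof.
move=> IHe N D nN fD PCD w z Dw.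
have PCe := IHe e (leqnn e) N _ nN (square_filtrationP fD)
  (square_filtration_power_condition fD (fun e' lt_e => IHe e' (ltnW lt_e)) nN PCD).
set n := 2 ^ e.
(* (w z)^2 = c w^2 z^2 with c = w [z, w] w^-1 in D_2, whose 2^e-th power lies in N *)
set c := conjg w (comm z w).
have Dc : D 2 c by apply: normalJ (fD.1 2) _ _ (fD.2 _ _ _ Dw).
have Nc : N (gpow c n) by move: (PCD 2 c (leqnn 2) Dc); rewrite !subSS subn0.
have D'c : square_filtration D 1 c by apply: mem_gen; right.
have D'a : square_filtration D 1 (c ⋆ (w ⋆ w)).
  by apply: genM => //; apply: mem_gen; left; exists w.
have sq g : gpow g (2 ^ e.+1) = gpow (g ⋆ g) n by rewrite expnS gpowM gpow2.
have -> : gpow (w ⋆ z) (2 ^ e.+1) = gpow ((c ⋆ (w ⋆ w)) ⋆ (z ⋆ z)) n.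
  by rewrite sq; congr gpow; rewrite /c /conjg /comm; gsimpl.
rewrite !sq; apply: (congr_mod_trans nN (PCe _ _ D'a)).
apply: (congr_mod_trans nN (congr_mod_mulr nN _ (PCe _ _ D'c))).
by rewrite mulgA; apply: congr_mod_mulNl.
Qed.

Lemma power_congruenceP e : power_congruence e.
Proof.
elim/ltn_ind: e => [[|e]] IHe; first exact: power_congruence0.
by apply: power_congruenceS => e' e'e; apply: IHe.
Qed.

Lemma icomm_cons_cat u (us xs : seq H) : xs <> [::] -> icomm (u :: us ++ xs) = comm u (icomm (us ++ xs)).
Proof. by case: us => [|? ?]; case: xs. Qed.

Lemma icomm_conj g (xs : seq H) : conjg g (icomm xs) = icomm (map (conjg g) xs).
Proof.
elim: xs => [|x [|x2 xs] IH]; rewrite ?conjg1 //.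
by rewrite (icomm_cons_cat x [::] (xs := x2 :: xs)) // conjgR IH.
Qed.

Definition comm_filtration (xs : seq H) r :=
  gen (fun s => exists us g, size us = r /\ s = icomm (us ++ map (conjg g) xs)).

Lemma comm_filtration_normal xs r : is_normal (comm_filtration xs r).
Proof.
apply: gen_normal => s h [us [g [size_us ->]]].
exists (map (conjg h) us), (h ⋆ g); rewrite size_map icomm_conj map_cat -map_comp.
by rewrite (eq_map (conjgJ h g)).
Qed.

Lemma comm_filtrationP xs : xs <> [::] -> is_filtration (comm_filtration xs).
Proof.
move=> xs_neq0; split=> [|r u d]; first exact: comm_filtration_normal.
apply: normal_comm_gen (comm_filtration_normal _ _) _ _ _ => u0 s [us [g [size_us ->]]].
apply: mem_gen; exists (u0 :: us), g; split; first by rewrite /= size_us.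
by rewrite cat_cons icomm_cons_cat //; case: (xs) xs_neq0.
Qed.

Section Application.
Variables (A : H -> Prop) (hA : (forall a, ~ A a) \/ is_normal A).

Lemma has_k_in_conjg g (xs : seq H) k : has_k_in A xs k -> has_k_in A (map (conjg g) xs) k.
Proof.
case=> js [size_js [sorted_js Ajs]]; exists js; split => //; split => // j /Ajs [j_lt Aj].
rewrite size_map (nth_map one) //; last by case/andP: j_lt; lia.
by split => //; case: hA => [nA | nA]; [case: (nA _ Aj) | apply: normalJ].
Qed.

Lemma has_k_in_catl (us xs : seq H) k : has_k_in A xs k -> has_k_in A (us ++ xs) k.
Proof.
case=> js [size_js [sorted_js Ajs]]; exists (map (addn (size us)) js).
rewrite size_map sorted_map; split => //; split.
  by apply: sub_sorted sorted_js => a b /=; rewrite ltn_add2l.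
move=> _ /mapP [j /Ajs [j_lt Aj] ->]; rewrite size_cat nth_cat; split; first lia.
have -> : (size us + j).-1 < size us = false by lia.
by have -> : (size us + j).-1 - size us = j.-1 by lia.
Qed.

Lemma E_normal l m : is_normal (E A l m).
Proof.
apply: gen_normal => s g [xs [k /= [lm km Axs ->]]].
exists (map (conjg g) xs), k; rewrite /= size_map gpowJ icomm_conj; split => //.
exact: has_k_in_conjg.
Qed.

Section CommFiltration.
Variables (m k : nat) (xs : seq H).
Hypotheses (xs_m : 1 <= size xs <= m) (k_le : k <= m - size xs) (Axs : has_k_in A xs k).
Let i := size xs.
Let e := m - i - k.
Let N := E A i.+1 m.+1.

Lemma xs_neq0 : xs <> [::].
Proof. by move/(congr1 size) => /=; lia. Qed.

Lemma E_gen_prefixed_comm us g : 1 <= size us <= e.+1 ->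
  E_gen A i.+1 m.+1 (gpow (icomm (us ++ map (conjg g) xs)) (2 ^ (e.+1 - size us))).
Proof.
move=> us_e; exists (us ++ map (conjg g) xs), k.
rewrite size_cat size_map /i; rewrite /e /i in us_e *; split; try lia.
  by apply: has_k_in_catl; apply: has_k_in_conjg.
by congr (gpow _ (2 ^ _)); lia.
Qed.

Lemma E_prefixed_comm us g : e.+1 <= size us -> N (icomm (us ++ map (conjg g) xs)).
Proof.
elim: us => [|u us IH] // le_us.
have [lt_us | ge_us] := leqP e.+2 (size (u :: us)).
  rewrite cat_cons icomm_cons_cat; last by case: (xs) xs_neq0.
  by apply: (normal_comm (E_normal _ _)); apply: IH; move: lt_us => /=; lia.
have us_e : 1 <= size (u :: us) <= e.+1 by move: ge_us => /=; lia.
have := mem_gen (@E_gen_prefixed_comm (u :: us) g us_e).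
by rewrite (_ : e.+1 - size (u :: us) = 0) ?expn0 ?gpow1 //; lia.
Qed.

Lemma comm_filtration_power_condition : power_condition e N (comm_filtration xs).
Proof.
apply: power_condition_gen; [by move=> *; apply: power_congruenceP | exact: E_normal | |].
  exact: comm_filtrationP xs_neq0.
move=> r d r2; apply: gen_subset => s [us [g [size_us ->]]]; apply: mem_gen; split.
  by apply: mem_gen; exists us, g.
rewrite -size_us; have [us_e | gt_us] := leqP (size us) e.+1.
  by apply: mem_gen; apply: E_gen_prefixed_comm; lia.
by rewrite (_ : e.+1 - size us = 0) ?expn0 ?gpow1; [apply: E_prefixed_comm; lia | lia].
Qed.

Lemma E_comm_gpow y :
  congr_mod N (comm (gpow (icomm xs) (2 ^ e)) y) (gpow (comm (icomm xs) y) (2 ^ e)).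
Proof.
apply: (congr_mod_comm_gpow (E_normal _ _)).
have D1 : comm_filtration xs 1 (comm y (icomm xs)).
  apply: mem_gen; exists [:: y], one; rewrite (eq_map conj1g) map_id.
  by rewrite (icomm_cons_cat y [::]) // => /(congr1 size) /=; lia.
have := @power_congruenceP e _ _ (E_normal _ _) (comm_filtrationP xs_neq0)
  comm_filtration_power_condition _ (icomm xs) D1.
by congr (congr_mod _ (gpow _ _) _); rewrite /comm /conjg; gsimpl.
Qed.

End CommFiltration.
End Application.
End Group.

Theorem lemma5p7 (H : Grp) (A : H -> Prop)
  (hA : (forall a, ~ A a) \/ is_normal A)
  (m i : nat) (y : H) (xs : seq H) (k : nat) :
  (1 <= m)%N -> (1 <= i <= m)%N -> size xs = i -> (k <= m - i)%N ->
  has_k_in A xs k ->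
  congr_mod (E A i.+1 m.+1)
    (comm (gpow (icomm xs) (2 ^ (m - i - k))) y)
    (gpow (comm (icomm xs) y) (2 ^ (m - i - k)))
  /\
  congr_mod (@Etilde H i.+1 m.+1)
    (comm (gpow (icomm xs) (2 ^ (m - i))) y)
    (gpow (comm (icomm xs) y) (2 ^ (m - i))).
Proof.
move=> _ xs_m sz k_le Axs; subst i; split; first exact: (E_comm_gpow hA xs_m k_le Axs y).
have no_A : has_k_in (fun _ : H => False) xs 0 by exists [::].
have := E_comm_gpow (or_introl (fun _ nA => nA)) xs_m (leq0n _) no_A y.
by rewrite subn0.
Qed.
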